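(* Let $\mathbf V$, $\mathbf V'$ be right vector spaces over (not necessarily commutative) fields $K$, $K'$, and let $\varphi:\mathcal P(\mathbf V)\dashrightarrow\mathcal P(\mathbf V')$ be a weak linear mapping such that $\operatorname{im}\varphi$ contains a triangle (three non-collinear points). Assume moreover that every field monomorphism $K\to K'$ is surjective. Then $\varphi$ is a linear mapping.
   Context: The projective space on a right vector space $\mathbf V$ over a skew field $K$ has point set $\mathcal P(\mathbf V)$ = set of one-dimensional subspaces, and lines = sets of points contained in a two-dimensional subspace. $\vee$ denotes join (span) of subspaces; for distinct points $X,Y$, $\{X\}\vee\{Y\}$ is the line through them, with conventions $\emptyset\vee\mathcal S=\mathcal S$ and $\{Z\}\vee\{Z\}=\{Z\}$. A partially defined mapping $\varphi:\mathcal P\dashrightarrow\mathcal P'$ has domain $\operatorname{dom}\varphi$, image set $\operatorname{im}\varphi$, exceptional set $\operatorname{ex}\varphi=\mathcal P\setminus\operatorname{dom}\varphi$; for $\mathcal M\subset\mathcal P$, $\mathcal M^\varphi:=\{X^\varphi:X\in\mathcal M\cap\operatorname{dom}\varphi\}$. $\varphi$ is weak linear if $(\{X\}\vee\{Y\})^\varphi\subset\{X\}^\varphi\vee\{Y\}^\varphi$ for all distinct points $X,Y$. $\varphi$ is linear if (L1) $(\{X\}\vee\{Y\})^\varphi=\{X\}^\varphi\vee\{Y\}^\varphi$ for all distinct points $X,Y$, and (L2) whenever $X^\varphi=Y^\varphi$ for distinct $X,Y\in\operatorname{dom}\varphi$, the line $\{X\}\vee\{Y\}$ contains a point of $\operatorname{ex}\varphi$.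 *)

From HB Require Import structures.
From mathcomp Require Import all_boot all_order all_algebra.
Set Implicit Arguments. Unset Strict Implicit. Unset Printing Implicit Defensive.
Import GRing.Theory.
Local Open Scope ring_scope.

Definition skew_field (K : unitRingType) : Prop :=
  forall x : K, x != 0 -> x \is a GRing.unit.

(* A right vector space over K is modelled as a left module over the
   converse ring K^c: the scaling  a *: v  (a : K^c) stands for  v a. *)

Section Proj.
Variables (R : pzRingType) (V : lmodType R).

Definition vspan (S : V -> Prop) : V -> Prop :=
  fun v => forall W : V -> Prop,
    W 0 -> (forall x y, W x -> W y -> W (x + y)) ->
    (forall (a : R) x, W x -> W (a *: x)) ->
    (forall x, S x -> W x) -> W v.

Definition is_point (X : V -> Prop) : Prop :=
  exists v : V, v != 0 /\ X = (fun w => exists a : R, w = a *: v).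

Definition point := {X : V -> Prop | is_point X}.

Definition pset := point -> Prop.

Definition pset1 (X : point) : pset := fun Y => Y = X.

(* join of two sets of points: all points contained in the span of
   (the vectors of) all points of M and N.  pjoin M N = M \/ N;
   it yields empty set / point / line in the cases used below. *)
Definition pjoin (M N : pset) : pset :=
  fun Z => forall v, proj1_sig Z v ->
    vspan (fun w => exists X : point, (M X \/ N X) /\ proj1_sig X w) v.

Definition psubset (M N : pset) : Prop := forall X, M X -> N X.
Definition pseteq (M N : pset) : Prop := forall X, M X <-> N X.
End Proj.

Arguments pset1 {R V}.

Section Maps.
Variables (R R' : pzRingType) (V : lmodType R) (V' : lmodType R').

(* partially defined mapping P(V) --> P(V'): None = exceptional *)
Definition projmap := point V -> option (point V').

Definition pimage (phi : projmap) (M : pset V) : pset V' :=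
  fun Z => exists X, M X /\ phi X = Some Z.

Definition im (phi : projmap) : pset V' := pimage phi (fun _ => True).

Definition weak_linear (phi : projmap) : Prop :=
  forall X Y : point V, X <> Y ->
    psubset (pimage phi (pjoin (pset1 X) (pset1 Y)))
            (pjoin (pimage phi (pset1 X)) (pimage phi (pset1 Y))).

Definition linear_map (phi : projmap) : Prop :=
  (forall X Y : point V, X <> Y ->
     pseteq (pimage phi (pjoin (pset1 X) (pset1 Y)))
            (pjoin (pimage phi (pset1 X)) (pimage phi (pset1 Y)))) /\
  (forall (X Y : point V) (Z' : point V'), X <> Y ->
     phi X = Some Z' -> phi Y = Some Z' ->
     exists Z, pjoin (pset1 X) (pset1 Y) Z /\ phi Z = None).
End Maps.

Definition contains_triangle (R : pzRingType) (V : lmodType R) (M : pset V) :=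
  exists A B C : point V, [/\ M A, M B, M C, A <> B &
    ~ pjoin (pset1 A) (pset1 B) C].

From HB Require Import structures.
From mathcomp Require Import all_boot all_order all_algebra.
From Stdlib Require Import Classical FunctionalExtensionality PropExtensionality ProofIrrelevance IndefiniteDescription.
Set Implicit Arguments. Unset Strict Implicit. Unset Printing Implicit Defensive.
Import GRing.Theory.
Local Open Scope ring_scope.

(* Weak linearity sends lines into lines, and a line
   whose two points have independent images contains no exceptional point and is
   mapped injectively.  Take x, y, z whose images x0, y0, z0 form a triangle and
   rescale so that x + y and x + z map to x0 + y0 and x0 + z0; then the rule
   x + a y |-> x0 + s(a) y0 defines a ring monomorphism s : K -> K', its additivity
   and multiplicativity being read off the images of points of the plane x y z.
   Since s is onto, every point of an image line is the image of a point of the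
   line, which is (L1).  (L2) follows by comparing two lines through an auxiliary
   point, see [collapsed_line_exceptional]. *)

(** * Linear algebra over a skew field *)

Section SkewLinearAlgebra.
Variables (F : unitRingType) (V : lmodType F).
Hypothesis skewF : skew_field F.

Lemma skew_mulVf (a : F) : a != 0 -> a^-1 * a = 1.
Proof. by move=> /skewF /mulVr. Qed.

Lemma skew_mulfV (a : F) : a != 0 -> a * a^-1 = 1.
Proof. by move=> /skewF /mulrV. Qed.

Lemma skew_scaleKf (a : F) (v : V) : a != 0 -> a^-1 *: (a *: v) = v.
Proof. by move=> na; rewrite scalerA skew_mulVf // scale1r. Qed.

Lemma skew_mulf_eq0 (a b : F) : (a * b == 0) = (a == 0) || (b == 0).
Proof.
have [-> | na] := eqVneq a 0; first by rewrite mul0r eqxx.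
by rewrite mulrI_eq0 //; apply/mulrI/skewF.
Qed.

Lemma skew_scaler_eq0 (a : F) (v : V) : (a *: v == 0) = (a == 0) || (v == 0).
Proof.
have [-> | na] := eqVneq a 0; first by rewrite scale0r eqxx.
apply/eqP/eqP => [av0 | ->]; last exact: scaler0.
by rewrite -(skew_scaleKf v na) av0 scaler0.
Qed.

Definition span1 (v w : V) := exists a : F, w = a *: v.
Definition span2 (x y w : V) := exists a b : F, w = a *: x + b *: y.
Definition free2 (x y : V) := forall a b : F, a *: x + b *: y = 0 -> a = 0 /\ b = 0.
Definition free3 (x y z : V) :=
  forall a b c : F, a *: x + b *: y + c *: z = 0 -> [/\ a = 0, b = 0 & c = 0].

Lemma span2_l x y : span2 x y x.
Proof. by exists 1, 0; rewrite scale1r scale0r addr0. Qed.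

Lemma span2_r x y : span2 x y y.
Proof. by exists 0, 1; rewrite scale1r scale0r add0r. Qed.

Lemma span2_sym x y w : span2 x y w -> span2 y x w.
Proof. by move=> [a [b ->]]; exists b, a; rewrite addrC. Qed.

Lemma span2_add x y u v : span2 x y u -> span2 x y v -> span2 x y (u + v).
Proof.
move=> [a [b ->]] [c [d ->]]; exists (a + c), (b + d).
by rewrite !scalerDl addrACA.
Qed.

Lemma span2Z x y u (k : F) : span2 x y u -> span2 x y (k *: u).
Proof. by move=> [a [b ->]]; exists (k * a), (k * b); rewrite scalerDr !scalerA. Qed.

Lemma span2_sub x y u v : span2 x y u -> span2 x y v -> span2 x y (u - v).
Proof. by move=> hu hv; rewrite -scaleN1r; apply/span2_add/span2Z. Qed.

Lemma span2_comb x y u v (a b : F) :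
  span2 x y u -> span2 x y v -> span2 x y (a *: u + b *: v).
Proof. by move=> hu hv; apply: span2_add; apply: span2Z. Qed.

Lemma span2_trans a b u v w :
  span2 a b u -> span2 a b v -> span2 u v w -> span2 a b w.
Proof. by move=> hu hv [c [d ->]]; apply: span2_comb. Qed.

Lemma span2_id a w : span2 a a w -> span1 a w.
Proof. by move=> [k [l ->]]; exists (k + l); rewrite scalerDl. Qed.

Lemma free2_sym x y : free2 x y -> free2 y x.
Proof. by move=> h a b e; have [] := h b a; rewrite // addrC. Qed.

Lemma free2_neq0l x y : free2 x y -> x != 0.
Proof.
move=> h; apply/eqP => x0; have [] := h 1 0; last by move/eqP; rewrite oner_eq0.
by rewrite x0 scaler0 scale0r addr0.
Qed.

Lemma free2_neq0r x y : free2 x y -> y != 0.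
Proof. by move/free2_sym/free2_neq0l. Qed.

Lemma free2_notin_span1 x y : free2 x y -> ~ span1 x y.
Proof.
move=> h [k ey]; have [] := h k (-1); first by rewrite -ey scaleN1r subrr.
by move=> _ /eqP; rewrite oppr_eq0 oner_eq0.
Qed.

Lemma free2_coef x y (a b c d : F) :
  free2 x y -> a *: x + b *: y = c *: x + d *: y -> a = c /\ b = d.
Proof.
move=> h e; have [] := h (a - c) (b - d).
  by rewrite !scalerBl addrACA e -addrACA !subrr addr0.
by move=> /eqP; rewrite subr_eq0 => /eqP -> /eqP; rewrite subr_eq0 => /eqP ->.
Qed.

Lemma free3_coef x y z (a b c a' b' c' : F) :
  free3 x y z -> a *: x + b *: y + c *: z = a' *: x + b' *: y + c' *: z ->
  [/\ a = a', b = b' & c = c'].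
Proof.
move=> h e; have [] := h (a - a') (b - b') (c - c').
  by rewrite !scalerBl (addrACA (a*:x)) (addrACA (a*:x + b*:y)) -!opprD e subrr.
by move=> /eqP; rewrite subr_eq0 => /eqP -> /eqP; rewrite subr_eq0 => /eqP ->
   /eqP; rewrite subr_eq0 => /eqP ->.
Qed.

Lemma free3_free2 x y z : free3 x y z -> free2 x y.
Proof. by move=> h a b e; have [] := h a b 0; first by rewrite scale0r addr0. Qed.

Lemma free3_swap12 x y z : free3 x y z -> free3 y x z.
Proof. by move=> h a b c e; have [] := h b a c; first by rewrite (addrC (b *: x)). Qed.

Lemma free3_swap23 x y z : free3 x y z -> free3 x z y.
Proof.
by move=> h a b c e; have [] := h a c b; first by rewrite addrAC.
Qed.

Lemma free3_rot x y z : free3 x y z -> free3 y z x.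
Proof. by move/free3_swap12/free3_swap23. Qed.

Lemma free3_notin_span2 x y z : free3 x y z -> ~ span2 x y z.
Proof.
move=> h [a [b e]]; have [] := h a b (-1); first by rewrite e scaleN1r subrr.
by move=> _ _ /eqP; rewrite oppr_eq0 oner_eq0.
Qed.

Lemma free2_of_notin_span1 x y : x != 0 -> ~ span1 x y -> free2 x y.
Proof.
move=> nx hs a b e; have [b0 | nb] := eqVneq b 0.
  move: e; rewrite b0 scale0r addr0 => /eqP; rewrite skew_scaler_eq0 (negPf nx) orbF.
  by move/eqP.
exfalso; apply: hs; exists (- (b^-1 * a)).
have ey : b *: y = - (a *: x) by apply/eqP; rewrite -addr_eq0 addrC e.
by rewrite -(skew_scaleKf y nb) ey scalerN scalerA scaleNr.
Qed.

Lemma free3_of_notin_span2 x y z : free2 x y -> ~ span2 x y z -> free3 x y z.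
Proof.
move=> h hs a b c e; have [c0 | nc] := eqVneq c 0.
  by move: e; rewrite c0 scale0r addr0 => /h [].
exfalso; apply: hs; exists (- (c^-1 * a)), (- (c^-1 * b)).
have ez : c *: z = - (a *: x + b *: y) by apply/eqP; rewrite -addr_eq0 addrC e.
by rewrite -(skew_scaleKf z nc) ez scalerN scalerDr !scalerA !scaleNr opprD.
Qed.

Lemma nonfree2_span1 x y : x != 0 -> ~ free2 x y -> span1 x y.
Proof. by move=> nx hn; apply: NNPP => hs; exact: hn (free2_of_notin_span1 nx hs). Qed.

Lemma nonfree2_span2 x y z : ~ free2 x y -> span2 x y z -> z != 0 ->
  (x != 0 /\ span1 x z) \/ (y != 0 /\ span1 y z).
Proof.
move=> nxy [a [b ez]] nz; have [x0 | nx] := eqVneq x 0.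
  right; move: nz; rewrite ez x0 scaler0 add0r => nz; split; last by exists b.
  by apply: contraNneq nz => ->; rewrite scaler0.
have [k ey] := nonfree2_span1 nx nxy.
by left; split=> //; exists (a + b * k); rewrite ez ey scalerA scalerDl.
Qed.

Lemma span1_free2F e a b : span1 e a -> span1 e b -> a != 0 -> ~ free2 a b.
Proof.
move=> [k ->] [l ->] na hab; apply: (free2_notin_span1 hab).
have nk : k != 0 by apply: contraNneq na => ->; rewrite scale0r.
by exists (l * k^-1); rewrite scalerA -mulrA skew_mulVf // mulr1.
Qed.

Lemma span2_exchange x y a b : free2 a b -> span2 x y a -> span2 x y b ->
  span2 a b x /\ span2 a b y.
Proof.
move=> hab ha hb.
wlog [a1 [b1 [ea na1]]] : x y ha hb / exists a1 b1, a = a1 *: x + b1 *: y /\ a1 != 0.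
  move=> gen; have [a1 [b1 ea]] := ha.
  have [a10 | na1] := eqVneq a1 0; last by apply: gen => //; exists a1, b1.
  have nb1 : b1 != 0.
    by apply: contraNneq (free2_neq0l hab) => b10; rewrite ea a10 b10 !scale0r addr0.
  suff [] : span2 a b y /\ span2 a b x by [].
  apply: gen; try exact: span2_sym.
  by exists b1, a1; rewrite ea addrC.
have hx : span2 a y x.
  exists a1^-1, (- (a1^-1 * b1)).
  by rewrite ea scalerDr skew_scaleKf // scalerA scaleNr addrK.
have [c [d eb]] : span2 a y b := span2_trans hx (span2_r a y) hb.
have nd : d != 0.
  apply/eqP => d0; apply: (free2_notin_span1 hab).
  by exists c; rewrite eb d0 scale0r addr0.
have hy : span2 a b y.
  exists (- (d^-1 * c)), d^-1.
  by rewrite eb scalerDr skew_scaleKf // scalerA scaleNr addKr.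
by split=> //; apply: span2_trans hy hx; apply: span2_l.
Qed.

Lemma free3_not_all_in_span2 x y a b c : free3 a b c ->
  ~ span2 x y a \/ ~ span2 x y b \/ ~ span2 x y c.
Proof.
move=> h; apply: NNPP => hn; apply: (free3_notin_span2 h).
have [ha hb hc] : [/\ span2 x y a, span2 x y b & span2 x y c].
  by split; apply: NNPP => ?; apply: hn; tauto.
have [hx hy] := span2_exchange (free3_free2 h) ha hb.
exact: span2_trans hx hy hc.
Qed.

Lemma free3_comb_neq0 x y z (a b : F) : free3 x y z -> x + a *: y + b *: z != 0.
Proof.
move=> h; apply/eqP => e; have [] := h 1 a b; first by rewrite scale1r.
by move/eqP; rewrite oner_eq0.
Qed.

Lemma free3_free2_addl x y z (s : F) : free3 x y z -> free2 (x + s *: y) z.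
Proof.
move=> h c1 c2 e; have [] := h c1 (c1 * s) c2; last by [].
by rewrite -scalerA -scalerDr.
Qed.

Lemma free3_free2_addr x y z (s : F) : free3 x y z -> free2 x (y + s *: z).
Proof.
move=> h c1 c2 e; have [] := h c1 c2 (c2 * s); last by [].
by rewrite -scalerA -addrA -scalerDr.
Qed.

Lemma free3_free2_add x y z (s t : F) : free3 x y z -> free2 (x + s *: y) (y + t *: z).
Proof.
move=> h c1 c2 e.
have e' : c1 *: x + (c1 * s + c2) *: y + (c2 * t) *: z = 0.
  by rewrite -e scalerDl !scalerDr !scalerA !addrA.
have [c10 hc2 _] := h _ _ _ e'.
by move: hc2; rewrite c10 mul0r add0r.
Qed.

Lemma free3_free2_span2 x y z w : free3 x y z -> span2 x y w -> w != 0 -> free2 z w.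
Proof.
move=> h [m [n ew]] nw a b e.
have e' : (b * m) *: x + (b * n) *: y + a *: z = 0.
  by rewrite -!scalerA -scalerDr -ew addrC.
have [bm0 bn0 a0] := h _ _ _ e'.
split=> //; apply/eqP; apply: contraNT nw => nb; rewrite ew.
move/eqP: bm0; move/eqP: bn0; rewrite !skew_mulf_eq0 (negPf nb) /= => /eqP -> /eqP ->.
by rewrite !scale0r addr0.
Qed.

Lemma free3_free2_comb x y z (al be ga de : F) : free3 x y z -> al != 0 -> de != 0 ->
  free2 (al *: x + be *: z) (ga *: y + de *: z).
Proof.
move=> h nal nde a b e.
have e' : (a * al) *: x + (b * ga) *: y + (a * be + b * de) *: z = 0.
  rewrite -e !scalerDr !scalerA scalerDl.
  by rewrite !addrA; congr (_ + _); rewrite addrAC.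
have [/eqP aal0 _ /eqP] := h _ _ _ e'.
move: aal0; rewrite skew_mulf_eq0 // (negPf nal) orbF => /eqP a0.
by rewrite a0 mul0r add0r skew_mulf_eq0 // (negPf nde) orbF => /eqP.
Qed.

Lemma free3Z x y z (b c : F) : free3 x y z -> b != 0 -> c != 0 ->
  free3 x (b *: y) (c *: z).
Proof.
move=> h nb nc a1 b1 c1; rewrite !scalerA => /h [-> /eqP + /eqP].
by rewrite !skew_mulf_eq0 (negPf nb) (negPf nc) !orbF => /eqP -> /eqP ->.
Qed.

Lemma free3_span2_meet x y c e t : free3 x y c -> span2 x y e ->
  span2 c e t -> span2 x y t -> span1 e t.
Proof.
move=> h se [u [v et]] st; have [u0 | nu] := eqVneq u 0.
  by exists v; rewrite et u0 scale0r add0r.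
exfalso; apply: (free3_notin_span2 h).
have -> : c = u^-1 *: t - (u^-1 * v) *: e.
  by rewrite et scalerDr skew_scaleKf // scalerA addrK.
by apply: span2_sub; apply: span2Z.
Qed.

End SkewLinearAlgebra.

(** * Points of a projective space *)

Section Points.
Variables (F : unitRingType) (V : lmodType F).
Hypothesis skewF : skew_field F.

Definition pmem (X : point V) (v : V) := proj1_sig X v.

Definition pt (v : V) (nv : v != 0) : point V :=
  exist _ (fun w => exists a : F, w = a *: v) (ex_intro _ v (conj nv erefl)).

Lemma pt_mem v (nv : v != 0) : pmem (pt nv) v.
Proof. by exists 1; rewrite scale1r. Qed.

Lemma point_vec (X : point V) : exists v, v != 0 /\ pmem X v.
Proof.
case: X => P hP; have [v [nv eP]] := hP; rewrite /pmem /= eP.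
by exists v; split=> //; exists 1; rewrite scale1r.
Qed.

Lemma pmem_span1 (X : point V) v : pmem X v -> v != 0 ->
  forall w, pmem X w <-> span1 v w.
Proof.
case: X => P hP; have [v0 [_ eP]] := hP; rewrite /pmem /= eP => -[c ec] nv w; split.
- move=> [a ->]; have nc : c != 0 by apply: contraNneq nv => c0; rewrite ec c0 scale0r.
  by exists (a * c^-1); rewrite ec scalerA -mulrA skew_mulVf // mulr1.
- by move=> [a ->]; exists (a * c); rewrite ec scalerA.
Qed.

Lemma pmemZ (X : point V) v (a : F) : pmem X v -> pmem X (a *: v).
Proof.
case: X => P hP; have [v0 [_ eP]] := hP; rewrite /pmem /= eP => -[c ->].
by exists (a * c); rewrite scalerA.
Qed.

Lemma point_eq_pmem (X Y : point V) v : pmem X v -> pmem Y v -> v != 0 -> X = Y.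
Proof.
move=> hX hY nv.
have e : proj1_sig X = proj1_sig Y.
  apply: functional_extensionality => w; apply: propositional_extensionality.
  by rewrite -/(pmem X w) -/(pmem Y w) (pmem_span1 hX nv) (pmem_span1 hY nv).
move: X Y e {hX hY} => [P hP] [Q hQ] /= e; subst Q; f_equal; apply: proof_irrelevance.
Qed.

Lemma free2_point_neq (X Y : point V) x y : pmem X x -> pmem Y y -> free2 x y -> X <> Y.
Proof.
move=> hx hy hxy eXY; subst Y; apply: (free2_notin_span1 hxy).
exact/(pmem_span1 hx (free2_neq0l hxy)).
Qed.

Lemma point_neq_free2 (X Y : point V) x y : pmem X x -> pmem Y y -> x != 0 -> y != 0 ->
  X <> Y -> free2 x y.
Proof.
move=> hx hy nx ny nXY; apply: NNPP => nxy; apply: nXY.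
have [k eyk] := nonfree2_span1 skewF nx nxy.
by apply: (point_eq_pmem _ hy ny); rewrite eyk; apply: pmemZ.
Qed.

Lemma vspan_span2 (S : V -> Prop) a b v :
  (forall w, S w -> span2 a b w) -> vspan S v -> span2 a b v.
Proof.
move=> hS; apply=> [||k u|//]; [|exact: span2_add|exact: span2Z].
by exists 0, 0; rewrite !scale0r addr0.
Qed.

Lemma pjoin_span2 (X Y Z : point V) x y z : pmem X x -> pmem Y y -> pmem Z z -> z != 0 ->
  span2 x y z -> pjoin (pset1 X) (pset1 Y) Z.
Proof.
move=> hx hy hz nz [a [b ez]] v /(pmem_span1 hz nz) [k ->] W _ WD WZ WS.
rewrite ez scalerDr !scalerA; apply: WD; apply: WZ; apply: WS.
- by exists X; split; [left|].
- by exists Y; split; [right|].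
Qed.

End Points.

(** * Weak linear maps *)

Definition embeddings_onto (R S : pzRingType) := forall s : R -> S,
  s 1 = 1 -> {morph s : a b / a + b} -> {morph s : a b / a * b} ->
  forall y, exists x, s x = y.

Section WeakLinearMaps.
Variables (F F' : unitRingType) (V : lmodType F) (V' : lmodType F').
Hypotheses (skewF : skew_field F) (skewF' : skew_field F').
Variable phi : projmap V V'.

Definition maps_to (v : V) (v' : V') := [/\ v != 0, v' != 0 &
  exists X Y, [/\ pmem X v, phi X = Some Y & pmem Y v']].

Definition exceptional (v : V) := v != 0 /\ exists X, pmem X v /\ phi X = None.

Lemma maps_to_neq0 v v' : maps_to v v' -> v != 0.
Proof. by case. Qed.

Lemma maps_to_neq0r v v' : maps_to v v' -> v' != 0.
Proof. by case. Qed.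

Lemma maps_toVexceptional v : v != 0 -> (exists v', maps_to v v') \/ exceptional v.
Proof.
move=> nv; case e: (phi (pt nv)) => [Y|].
- left; have [y [ny my]] := point_vec Y; exists y; split=> //.
  by exists (pt nv), Y; split=> //; apply: pt_mem.
- by right; split=> //; exists (pt nv); split=> //; apply: pt_mem.
Qed.

Lemma maps_to_point v v' X : maps_to v v' -> pmem X v ->
  exists Y, phi X = Some Y /\ pmem Y v'.
Proof.
move=> [nv _ [X1 [Y [mX1 eY mY]]]] mX.
by rewrite (point_eq_pmem skewF mX mX1 nv); exists Y.
Qed.

Lemma exceptional_point v X : exceptional v -> pmem X v -> phi X = None.
Proof. by move=> [nv [X1 [mX1 e]]] mX; rewrite (point_eq_pmem skewF mX mX1 nv). Qed.

Lemma maps_to_exceptionalF v v' : maps_to v v' -> exceptional v -> False.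
Proof.
move=> hv [_ [X [mX eX]]]; have [Y [eY _]] := maps_to_point hv mX.
by rewrite eX in eY.
Qed.

Lemma maps_to_uniq v a b : maps_to v a -> maps_to v b -> span1 a b.
Proof.
move=> ha [_ _ [X [Y [mX eY mY]]]].
have [Y1 [eY1 mY1]] := maps_to_point ha mX; move: eY mY; rewrite eY1 => -[<-] mY.
exact/(pmem_span1 skewF' mY1 (maps_to_neq0r ha)).
Qed.

Lemma maps_toZl v v' (a : F) : maps_to v v' -> a != 0 -> maps_to (a *: v) v'.
Proof.
move=> [nv nv' [X [Y [mX eY mY]]]] na; split=> //.
- by rewrite skew_scaler_eq0 // negb_or na.
- by exists X, Y; split=> //; apply: pmemZ.
Qed.

Lemma maps_toZr v v' (b : F') : maps_to v v' -> b != 0 -> maps_to v (b *: v').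
Proof.
move=> [nv nv' [X [Y [mX eY mY]]]] nb; split=> //.
- by rewrite skew_scaler_eq0 // negb_or nb.
- by exists X, Y; split=> //; apply: pmemZ.
Qed.

Lemma maps_toZ_uniq v a w' (c : F) : maps_to v a -> maps_to (c *: v) w' -> span1 a w'.
Proof.
move=> hv hcv; have nc : c != 0.
  by apply: contraNneq (maps_to_neq0 hcv) => ->; rewrite scale0r.
exact: maps_to_uniq (maps_toZl hv nc) hcv.
Qed.

Definition image_span1 (X : point V) (x' : V') :=
  forall Z u, pimage phi (pset1 X) Z -> pmem Z u -> span1 x' u.

Lemma maps_to_image_span1 x x' X : maps_to x x' -> pmem X x -> image_span1 X x'.
Proof.
move=> hx mX Z u [X1 [-> eZ]]; have [Y [eY mY]] := maps_to_point hx mX.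
by move: eZ; rewrite eY => -[<-] /(pmem_span1 skewF' mY (maps_to_neq0r hx)).
Qed.

Lemma exceptional_image_span1 y Y : exceptional y -> pmem Y y -> image_span1 Y 0.
Proof. by move=> hy mY Z u [Y1 [-> eZ]]; rewrite (exceptional_point hy mY) in eZ. Qed.

Lemma image_span1_exists X : exists x', image_span1 X x' /\
  (x' != 0 -> forall x, pmem X x -> x != 0 -> maps_to x x').
Proof.
case e: (phi X) => [X'|].
- have [x' [nx' mx']] := point_vec X'; exists x'; split.
  + by move=> Z u [X1 [-> eZ]]; move: eZ; rewrite e => -[<-] /(pmem_span1 skewF' mx' nx').
  + by move=> _ x mx nx; split=> //; exists X, X'.
- exists 0; split=> [Z u [X1 [-> eZ]] | ]; last by rewrite eqxx.
  by rewrite e in eZ.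
Qed.

Lemma pjoin_pimage_span2 X Y x' y' : image_span1 X x' -> image_span1 Y y' ->
  forall Z z, pjoin (pimage phi (pset1 X)) (pimage phi (pset1 Y)) Z -> pmem Z z ->
  span2 x' y' z.
Proof.
move=> hX hY Z z hj mz; apply: vspan_span2 (hj z mz) => u [W [[hW|hW] mu]].
- by have [k ->] := hX W u hW mu; apply: span2Z; apply: span2_l.
- by have [k ->] := hY W u hW mu; apply: span2Z; apply: span2_r.
Qed.

Definition image_triangle := exists a b c a0 b0 c0,
  [/\ maps_to a a0, maps_to b b0, maps_to c c0 & free3 a0 b0 c0].

Lemma image_triangle_of : contains_triangle (im phi) -> image_triangle.
Proof.
move=> [A [B [C [[XA [_ eA]] [XB [_ eB]] [XC [_ eC]] nAB nC]]]].
have [a0 [na0 ma0]] := point_vec A; have [a [na ma]] := point_vec XA.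
have [b0 [nb0 mb0]] := point_vec B; have [b [nb mb]] := point_vec XB.
have [c0 [nc0 mc0]] := point_vec C; have [c [nc mc]] := point_vec XC.
exists a, b, c, a0, b0, c0; split.
- by split=> //; exists XA, A.
- by split=> //; exists XB, B.
- by split=> //; exists XC, C.
apply: (free3_of_notin_span2 skewF' (point_neq_free2 skewF' ma0 mb0 na0 nb0 nAB)).
by move=> hs; apply: nC; apply: (pjoin_span2 skewF' ma0 mb0 mc0 nc0 hs).
Qed.

Hypothesis WL : weak_linear phi.

Lemma weak_linear_span2 x y w w' X Y x' y' : free2 x y -> pmem X x -> pmem Y y ->
  image_span1 X x' -> image_span1 Y y' ->
  span2 x y w -> maps_to w w' -> span2 x' y' w'.
Proof.
move=> hxy mX mY hX hY hw [nw _ [W [W' [mW eW mW']]]].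
have hj := pjoin_span2 skewF mX mY mW nw hw.
have := WL (free2_point_neq skewF mX mY hxy) (ex_intro _ W (conj hj eW)).
by move/pjoin_pimage_span2; apply.
Qed.

Lemma maps_to_span2_free x y w x' y' w' : free2 x y -> maps_to x x' -> maps_to y y' ->
  span2 x y w -> maps_to w w' -> span2 x' y' w'.
Proof.
move=> hxy hx hy; have [_ _ [X [_ [mX _ _]]]] := hx; have [_ _ [Y [_ [mY _ _]]]] := hy.
exact: weak_linear_span2 hxy mX mY (maps_to_image_span1 hx mX) (maps_to_image_span1 hy mY).
Qed.

Lemma weak_linear_exceptional x y w x' w' : free2 x y -> maps_to x x' -> exceptional y ->
  span2 x y w -> maps_to w w' -> span1 x' w'.
Proof.
move=> hxy hx hy hw hw'; have [_ _ [X [_ [mX _ _]]]] := hx; have [_ [Y [mY _]]] := hy.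
have [a [b ->]] := weak_linear_span2 hxy mX mY (maps_to_image_span1 hx mX)
  (exceptional_image_span1 hy mY) hw hw'.
by exists a; rewrite scaler0 addr0.
Qed.

Lemma free2_preimage x y x' y' : maps_to x x' -> maps_to y y' -> free2 x' y' -> free2 x y.
Proof.
move=> hx hy hi; apply: NNPP => nxy.
have [k ek] := nonfree2_span1 skewF (maps_to_neq0 hx) nxy.
by move: hy; rewrite ek => /(maps_toZ_uniq hx); apply: free2_notin_span1.
Qed.

Lemma maps_to_span2 x y w x' y' w' : maps_to x x' -> maps_to y y' -> free2 x' y' ->
  span2 x y w -> maps_to w w' -> span2 x' y' w'.
Proof. by move=> hx hy hi; apply: maps_to_span2_free => //; apply: free2_preimage hi. Qed.

Lemma free3_preimage x y z x' y' z' : maps_to x x' -> maps_to y y' -> maps_to z z' ->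
  free3 x' y' z' -> free3 x y z.
Proof.
move=> hx hy hz hi; have hi2 := free3_free2 hi.
apply: (free3_of_notin_span2 skewF); first exact: free2_preimage hi2.
by move=> hs; apply: (free3_notin_span2 hi); apply: maps_to_span2 hx hy hi2 hs hz.
Qed.

(* An exceptional point u on the line would put y on the line x u, and weak
   linearity would then force the image of y into the image of x. *)
Lemma line_in_domain x y w x' y' : maps_to x x' -> maps_to y y' -> free2 x' y' ->
  span2 x y w -> w != 0 -> exists w', maps_to w w'.
Proof.
move=> hx hy hi [a [b ew]] nw; case: (maps_toVexceptional nw) => // hU; exfalso.
have hxy := free2_preimage hx hy hi.
have [b0 | nb] := eqVneq b 0.
  have na : a != 0 by apply: contraNneq nw => a0; rewrite ew b0 a0 !scale0r addr0.
  apply: (maps_to_exceptionalF (v' := x') _ hU).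
  by rewrite ew b0 scale0r addr0; apply: maps_toZl.
have hxw : free2 x w.
  move=> c d e.
  have e' : (c + d * a) *: x + (d * b) *: y = 0.
    by rewrite -e ew scalerDr !scalerA scalerDl addrA.
  have [h1 /eqP] := hxy _ _ e'; rewrite skew_mulf_eq0 // (negPf nb) orbF => /eqP d0.
  by move: h1; rewrite d0 mul0r addr0.
have hsy : span2 x w y.
  exists (- (b^-1 * a)), b^-1.
  by rewrite ew scalerDr !scalerA skew_mulVf // scale1r scaleNr addKr.
exact: free2_notin_span1 hi (weak_linear_exceptional hxw hx hU hsy hy).
Qed.

Section LineInjective.
Variables (x y c p q : V) (x0 y0 c0 e0 : V').
Hypotheses (hx : maps_to x x0) (hy : maps_to y y0) (hc : maps_to c c0).
Hypotheses (hi : free3 x0 y0 c0) (sp : span2 x y p) (sq : span2 x y q).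
Hypotheses (hp : maps_to p e0) (hq : maps_to q e0).

Let e0_xy : span2 x0 y0 e0 := maps_to_span2 hx hy (free3_free2 hi) sp hp.
Let c0e0_free : free2 c0 e0 := free3_free2_span2 skewF' hi e0_xy (maps_to_neq0r hp).

(* Write t = al p + be q as al (c + p) + (be q - al c): both summands lie on lines
   through c whose images span the plane c0 e0, so the image of t lies in that
   plane, and also on the line x0 y0, whose only common point with it is e0. *)
Lemma comb_maps_to_image (hpq : free2 p q) al be t0 : be != 0 ->
  maps_to (al *: p + be *: q) t0 -> span1 e0 t0.
Proof.
move=> nbe ht.
have hpqc : free3 p q c.
  apply: (free3_of_notin_span2 skewF hpq) => hs.
  exact: free3_notin_span2 (free3_preimage hx hy hc hi) (span2_trans sp sq hs).
set r := c + p; set s := be *: q - al *: c.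
have hcp : free2 c p := free2_preimage hc hp c0e0_free.
have hcq : free2 c q := free2_preimage hc hq c0e0_free.
have spr : span2 c p r by exists 1, 1; rewrite !scale1r.
have sps : span2 c q s by exists (- al), be; rewrite addrC scaleNr.
have nr : r != 0.
  apply/eqP => e; have [] := hcp 1 1; first by rewrite !scale1r.
  by move/eqP; rewrite oner_eq0.
have ns : s != 0.
  apply/eqP => e; have [] := hcq (- al) be; first by rewrite addrC scaleNr.
  by move=> _ /eqP; rewrite (negPf nbe).
have [r0 hr] := line_in_domain hc hp c0e0_free spr nr.
have [s0 hs] := line_in_domain hc hq c0e0_free sps ns.
have hrs : free2 r s.
  move=> a b e.
  have e' : a *: p + (b * be) *: q + (a - b * al) *: c = 0.
    rewrite -e /r /s scalerDr scalerBr !scalerA scalerBl.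
    by rewrite addrC -!addrA; congr (_ + _); rewrite addrC -!addrA; congr (_ + _);
      rewrite addrC addrA subrK.
  have [-> /eqP + _] := hpqc _ _ _ e'.
  by rewrite skew_mulf_eq0 // (negPf nbe) orbF => /eqP.
have st : span2 r s (al *: p + be *: q).
  exists al, 1; rewrite scale1r /r /s scalerDr; symmetry.
  by rewrite addrC addrA subrK addrC.
apply: (free3_span2_meet skewF' hi e0_xy).
  apply: span2_trans (maps_to_span2_free hrs hr hs st ht).
  - exact: maps_to_span2 hc hp c0e0_free spr hr.
  - exact: maps_to_span2 hc hq c0e0_free sps hs.
by apply: maps_to_span2 hx hy (free3_free2 hi) _ ht; apply: span2_comb.
Qed.

Lemma same_image_span1 : span1 p q.
Proof.
apply: NNPP => npq; have hpq := free2_of_notin_span1 skewF (maps_to_neq0 hp) npq.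
have to_e0 v v0 : span2 p q v -> maps_to v v0 -> span1 e0 v0.
  move=> [al [be ev]] hv; have [be0 | nbe] := eqVneq be 0.
    by move: hv; rewrite ev be0 scale0r addr0 => /(maps_toZ_uniq hp).
  by move: hv; rewrite ev; apply: comb_maps_to_image.
have [pq_x pq_y] := span2_exchange skewF hpq sp sq.
apply: (span1_free2F skewF' (to_e0 _ _ pq_x hx) (to_e0 _ _ pq_y hy) (maps_to_neq0r hx)).
exact: free3_free2 hi.
Qed.

End LineInjective.

(** * The induced field embedding *)

Lemma coef_exists p q c p0 q0 c0 : maps_to p p0 -> maps_to q q0 -> maps_to c c0 ->
  free3 p0 q0 c0 -> forall a, exists b, maps_to (p + a *: q) (p0 + b *: q0).
Proof.
move=> hp hq hc hi a; have hi2 := free3_free2 hi.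
have hpq := free2_preimage hp hq hi2.
have sw : span2 p q (p + a *: q) by exists 1, a; rewrite scale1r.
have nw : p + a *: q != 0.
  apply/eqP => e; have [] := hpq 1 a; first by rewrite scale1r.
  by move/eqP; rewrite oner_eq0.
have [w0 hw] := line_in_domain hp hq hi2 sw nw.
have [u [v ew]] := maps_to_span2 hp hq hi2 sw hw.
have [u0 | nu] := eqVneq u 0.
  have nv : v != 0.
    by apply: contraNneq (maps_to_neq0r hw) => v0; rewrite ew u0 v0 !scale0r addr0.
  have hq' : maps_to q w0 by rewrite ew u0 scale0r add0r; apply: maps_toZr.
  have [k ek] := same_image_span1 hp hq hc hi sw (span2_r p q) hw hq'.
  have [k0 _] : k = 0 /\ k * a - 1 = 0.
    by apply: hpq; rewrite scalerBl scale1r addrA -scalerA -scalerDr -ek subrr.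
  by move: (maps_to_neq0 hq); rewrite ek k0 scale0r eqxx.
exists (u^-1 * v).
have := maps_toZr hw (_ : u^-1 != 0); rewrite invr_eq0 => /(_ nu).
by rewrite ew scalerDr skew_scaleKf // scalerA.
Qed.

Lemma coef_unique w p0 q0 (b b' : F') : free2 p0 q0 -> maps_to w (p0 + b *: q0) ->
  maps_to w (p0 + b' *: q0) -> b = b'.
Proof.
move=> hi hb hb'; have [k] := maps_to_uniq hb hb'.
rewrite scalerDr scalerA -{1}(scale1r p0) => /(free2_coef hi) [<- ->].
by rewrite mul1r.
Qed.

Section Coordinates.
Variables (x y z : V) (x0 y0 z0 : V').
Hypotheses (hx : maps_to x x0) (hy : maps_to y y0) (hz : maps_to z z0).
Hypothesis hi : free3 x0 y0 z0.
Variables sxy sxz syz : F -> F'.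
Hypothesis sxyP : forall a, maps_to (x + a *: y) (x0 + sxy a *: y0).
Hypothesis sxzP : forall a, maps_to (x + a *: z) (x0 + sxz a *: z0).
Hypothesis syzP : forall a, maps_to (y + a *: z) (y0 + syz a *: z0).

Lemma sxy_char a b : maps_to (x + a *: y) (x0 + b *: y0) -> sxy a = b.
Proof. exact: coef_unique (free3_free2 hi) (sxyP a). Qed.

Lemma sxz_char a b : maps_to (x + a *: z) (x0 + b *: z0) -> sxz a = b.
Proof. exact: coef_unique (free3_free2 (free3_swap23 hi)) (sxzP a). Qed.

Lemma sxy0 : sxy 0 = 0.
Proof. by apply: sxy_char; rewrite !scale0r !addr0. Qed.

Lemma sxz0 : sxz 0 = 0.
Proof. by apply: sxz_char; rewrite !scale0r !addr0. Qed.

Lemma coord_plane a b : maps_to (x + a *: y + b *: z) (x0 + sxy a *: y0 + sxz b *: z0).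
Proof.
have nw := free3_comb_neq0 a b (free3_preimage hx hy hz hi).
have sw1 : span2 (x + a *: y) z (x + a *: y + b *: z) by exists 1, b; rewrite scale1r.
have sw2 : span2 (x + b *: z) y (x + a *: y + b *: z).
  by exists 1, a; rewrite scale1r addrAC.
have hi1 : free2 (x0 + sxy a *: y0) z0 := free3_free2_addl hi.
have hi2 : free2 (x0 + sxz b *: z0) y0 := free3_free2_addl (free3_swap23 hi).
have [w0 hw] := line_in_domain (sxyP a) hz hi1 sw1 nw.
have [u [v e1]] := maps_to_span2 (sxyP a) hz hi1 sw1 hw.
have [u' [v' e2]] := maps_to_span2 (sxzP b) hy hi2 sw2 hw.
have e3 : u *: x0 + (u * sxy a) *: y0 + v *: z0 =
          u' *: x0 + v' *: y0 + (u' * sxz b) *: z0.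
  by rewrite -scalerA -scalerDr -e1 e2 scalerDr scalerA addrAC.
have [<- _ ev] := free3_coef hi e3.
have ew : w0 = u *: (x0 + sxy a *: y0 + sxz b *: z0).
  by rewrite e1 ev !scalerDr !scalerA.
have nu : u != 0.
  by apply: contraNneq (maps_to_neq0r hw) => u0; rewrite ew u0 scale0r.
have := maps_toZr hw (_ : u^-1 != 0); rewrite invr_eq0 => /(_ nu).
by rewrite ew skew_scaleKf.
Qed.

Lemma sxz_mul a b : a != 0 -> sxz b = sxy a * syz (a^-1 * b).
Proof.
move=> na; have hi' : free2 x0 (y0 + syz (a^-1 * b) *: z0) := free3_free2_addr hi.
have sw : span2 x (y + (a^-1 * b) *: z) (x + a *: y + b *: z).
  exists 1, a; rewrite scale1r scalerDr scalerA mulrA skew_mulfV // mul1r.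
  by rewrite addrA.
have [u [v e]] := maps_to_span2 hx (syzP _) hi' sw (coord_plane a b).
have E : 1 *: x0 + sxy a *: y0 + sxz b *: z0 =
         u *: x0 + v *: y0 + (v * syz (a^-1 * b)) *: z0.
  by rewrite scale1r e scalerDr scalerA addrA.
by have [_ -> ->] := free3_coef hi E.
Qed.

Lemma sxy_add a b : exists v, sxy a = sxy (a + b) + v /\ sxz b = v * syz (-1).
Proof.
have hi' : free2 (x0 + sxy (a + b) *: y0) (y0 + syz (-1) *: z0).
  exact: free3_free2_add.
have sw : span2 (x + (a + b) *: y) (y + (-1) *: z) (x + a *: y + b *: z).
  exists 1, (- b); rewrite scale1r scalerDr scalerA mulrN1 opprK scalerDl scaleNr.
  by rewrite !addrA addrK.
have [u [v e]] := maps_to_span2 (sxyP _) (syzP _) hi' sw (coord_plane a b).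
have E : 1 *: x0 + sxy a *: y0 + sxz b *: z0 =
         u *: x0 + (u * sxy (a + b) + v) *: y0 + (v * syz (-1)) *: z0.
  by rewrite scale1r e !scalerDr !scalerA scalerDl !addrA.
have [<- -> ->] := free3_coef hi E.
by exists v; rewrite mul1r.
Qed.

Hypotheses (hxy : maps_to (x + y) (x0 + y0)) (hxz : maps_to (x + z) (x0 + z0)).

Lemma sxy1 : sxy 1 = 1.
Proof. by apply: sxy_char; rewrite !scale1r. Qed.

Lemma sxz1 : sxz 1 = 1.
Proof. by apply: sxz_char; rewrite !scale1r. Qed.

Lemma sxz_syz : sxz =1 syz.
Proof. by move=> b; rewrite (sxz_mul b (oner_neq0 F)) invr1 !mul1r sxy1 mul1r. Qed.

Lemma sxy_sxz : sxy =1 sxz.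
Proof.
move=> a; have [-> | na] := eqVneq a 0; first by rewrite sxy0 sxz0.
by rewrite (sxz_mul a na) skew_mulVf // -sxz_syz sxz1 mulr1.
Qed.

Lemma syzN1 : syz (-1) = -1.
Proof.
have [v []] := sxy_add 0 1; rewrite add0r sxy0 sxy1 sxz1 => e1.
have -> : v = -1 by apply: (addrI 1); rewrite -e1 subrr.
by rewrite mulN1r => /(congr1 -%R); rewrite opprK.
Qed.

Lemma sxyD : {morph sxy : a b / a + b}.
Proof.
move=> a b; have [v [e1]] := sxy_add a b.
by rewrite syzN1 mulrN1 -sxy_sxz => ->; rewrite e1 addrK.
Qed.

Lemma sxyM : {morph sxy : a b / a * b}.
Proof.
move=> a b; have [-> | na] := eqVneq a 0; first by rewrite mul0r sxy0 mul0r.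
by rewrite sxy_sxz (sxz_mul (a * b) na) mulrA skew_mulVf // mul1r -sxz_syz -sxy_sxz.
Qed.

End Coordinates.

Lemma normalize_image x y z x0 y0 z0 : maps_to x x0 -> maps_to y y0 -> maps_to z z0 ->
  free3 x0 y0 z0 -> exists k, k != 0 /\ maps_to (x + y) (x0 + k *: y0).
Proof.
move=> hx hy hz hi; have [k] := coef_exists hx hy hz hi 1; rewrite scale1r => hk.
exists k; split=> //; apply/eqP => k0; move: hk; rewrite k0 scale0r addr0 => hk.
have sxy : span2 x y (x + y) by exists 1, 1; rewrite !scale1r.
have [l el] := same_image_span1 hx hy hz hi sxy (span2_l x y) hk hx.
have e : (l - 1) *: x + l *: y = 0.
  by rewrite scalerBl scale1r addrAC -scalerDr -el subrr.
have [+ l0] := free2_preimage hx hy (free3_free2 hi) e.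
by move/eqP; rewrite l0 sub0r oppr_eq0 oner_eq0.
Qed.

Section Onto.
Hypothesis onto : embeddings_onto F F'.

Lemma line_coef_onto x y z x0 y0 z0 : maps_to x x0 -> maps_to y y0 -> maps_to z z0 ->
  free3 x0 y0 z0 -> maps_to (x + y) (x0 + y0) -> maps_to (x + z) (x0 + z0) ->
  forall b, exists a, maps_to (x + a *: y) (x0 + b *: y0).
Proof.
move=> hx hy hz hi hxy hxz b.
have [sxy sxyP] := functional_choice _ (coef_exists hx hy hz hi).
have [sxz sxzP] := functional_choice _ (coef_exists hx hz hy (free3_swap23 hi)).
have [syz syzP] := functional_choice _ (coef_exists hy hz hx (free3_rot hi)).
have [a <-] := onto (sxy1 hi sxyP hxy) (sxyD hx hy hz hi sxyP sxzP syzP hxy hxz)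
  (sxyM hx hy hz hi sxyP sxzP syzP hxy hxz) b.
by exists a.
Qed.

Lemma preimage_on_line x y z x0 y0 z0 w0 : maps_to x x0 -> maps_to y y0 -> maps_to z z0 ->
  free3 x0 y0 z0 -> span2 x0 y0 w0 -> w0 != 0 -> exists w, span2 x y w /\ maps_to w w0.
Proof.
move=> hx hy hz hi [m [n ew]] nw.
have [m0 | nm] := eqVneq m 0.
  have nn : n != 0 by apply: contraNneq nw => n0; rewrite ew m0 n0 !scale0r addr0.
  exists y; split; first exact: span2_r.
  by rewrite ew m0 scale0r add0r; apply: maps_toZr.
have [b [nb hb]] := normalize_image hx hy hz hi.
have [c [nc hc]] := normalize_image hx hz hy (free3_swap23 hi).
have [a ha] := line_coef_onto hx (maps_toZr hy nb) (maps_toZr hz nc)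
  (free3Z skewF' hi nb nc) hb hc (m^-1 * n * b^-1).
exists (x + a *: y); split; first by exists 1, a; rewrite scale1r.
have := maps_toZr ha nm.
rewrite scalerDr !scalerA -!mulrA skew_mulVf // mulr1 mulrA skew_mulfV // mul1r.
by rewrite ew.
Qed.

(** * Linearity *)

Section Triangle.
Hypothesis triangle : image_triangle.

Lemma image_off_point x0 : x0 != 0 -> exists c c0, maps_to c c0 /\ free2 x0 c0.
Proof.
move=> nx0; have [a [b [c [a0 [b0 [c0 [ha hb hc hi]]]]]]] := triangle.
have [xa | nxa] := classic (span1 x0 a0); last first.
  by exists a, a0; split=> //; apply: free2_of_notin_span1.
have [xb | nxb] := classic (span1 x0 b0); last first.
  by exists b, b0; split=> //; apply: free2_of_notin_span1.
by have := span1_free2F skewF' xa xb (maps_to_neq0r ha) (free3_free2 hi).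
Qed.

Lemma image_off_line x0 y0 : free2 x0 y0 -> exists z z0, maps_to z z0 /\ free3 x0 y0 z0.
Proof.
move=> hi0; have [a [b [c [a0 [b0 [c0 [ha hb hc hi]]]]]]] := triangle.
case: (free3_not_all_in_span2 skewF' x0 y0 hi) => [na | [nb | nc]].
- by exists a, a0; split=> //; apply: free3_of_notin_span2.
- by exists b, b0; split=> //; apply: free3_of_notin_span2.
- by exists c, c0; split=> //; apply: free3_of_notin_span2.
Qed.

Lemma maps_to_sum_coef_neq0 x c p x0 c0 (al be : F) : maps_to x x0 -> maps_to c c0 ->
  free2 x0 c0 -> p = al *: x + be *: c -> maps_to p (x0 + c0) -> al != 0 /\ be != 0.
Proof.
move=> hx hc hi ep hp; split; apply/eqP => e0; move: hp; rewrite ep e0 scale0r.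
- rewrite add0r => /(maps_toZ_uniq hc) [k ek].
  have [] := free2_coef (a := 1) (b := 1) (c := 0) (d := k) hi.
    by rewrite scale0r add0r !scale1r.
  by move/eqP; rewrite oner_eq0.
- rewrite addr0 => /(maps_toZ_uniq hx) [k ek].
  have [] := free2_coef (a := 1) (b := 1) (c := k) (d := 0) hi.
    by rewrite scale0r addr0 !scale1r.
  by move=> _ /eqP; rewrite oner_eq0.
Qed.

(* With c0 off the image point x0 and d0 off the plane x0 c0, the point x0 + c0 has
   preimages p on the line x c and q on the line y c.  The combination r of p and q
   cancelling c lies on the line x y; its image would lie both on the point x0 and on
   the point x0 + c0, which is impossible. *)
Lemma collapsed_line_exceptional x y x0 : maps_to x x0 -> maps_to y x0 -> free2 x y ->
  exists r, [/\ span2 x y r, r != 0 & exceptional r].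
Proof.
move=> hx hy hxy.
have [c [c0 [hc ic]]] := image_off_point (maps_to_neq0r hx).
have [d [d0 [hd id]]] := image_off_line ic.
have sw0 : span2 x0 c0 (x0 + c0) by exists 1, 1; rewrite !scale1r.
have nw0 : x0 + c0 != 0.
  apply/eqP => e; have [] := ic 1 1; first by rewrite !scale1r.
  by move/eqP; rewrite oner_eq0.
have [p [[al [be ep]] hp]] := preimage_on_line hx hc hd id sw0 nw0.
have [q [[ga [de eq]] hq]] := preimage_on_line hy hc hd id sw0 nw0.
have [nal nbe] := maps_to_sum_coef_neq0 hx hc ic ep hp.
have [_ nde] := maps_to_sum_coef_neq0 hy hc ic eq hq.
have hxyc : free3 x y c.
  apply: (free3_of_notin_span2 skewF hxy) => hs.
  have [k ek] := span2_id (maps_to_span2_free hxy hx hy hs hc).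
  exact: free2_notin_span1 ic (ex_intro _ k ek).
set r := be^-1 *: p - de^-1 *: q.
have er : r = (be^-1 * al) *: x + (- (de^-1 * ga)) *: y.
  rewrite /r ep eq !scalerDr !scalerA !skew_mulVf // !scale1r scaleNr.
  by rewrite opprD addrA addrAC addrK.
have nr : r != 0.
  apply/eqP => e; have [] := hxy (be^-1 * al) (- (de^-1 * ga)); first by rewrite -er e.
  by move=> /eqP; rewrite skew_mulf_eq0 // invr_eq0 (negPf nbe) (negPf nal).
exists r; split=> //; first by rewrite er; exists (be^-1 * al), (- (de^-1 * ga)).
case: (maps_toVexceptional nr) => // -[r0 hr]; exfalso.
have [k ek] := span2_id (maps_to_span2_free hxy hx hy (ex_intro _ _ (ex_intro _ _ er)) hr).
have hpq : free2 p q by rewrite ep eq; apply: free3_free2_comb.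
have spq : span2 p q r by exists be^-1, (- de^-1); rewrite scaleNr.
have [l el] := span2_id (maps_to_span2_free hpq hp hq spq hr).
have e : k *: x0 + 0 *: c0 = l *: x0 + l *: c0.
  by rewrite scale0r addr0 -ek el scalerDr.
have [_ l0] := free2_coef ic e.
by move: (maps_to_neq0r hr); rewrite el -l0 scale0r eqxx.
Qed.


Lemma maps_to_span1_point x x' z X Z : maps_to x x' -> pmem X x -> pmem Z z -> z != 0 ->
  span1 x' z -> phi X = Some Z.
Proof.
move=> hx mX mZ nz [k ez]; have [Y [-> mY]] := maps_to_point hx mX.
by rewrite (point_eq_pmem skewF' (_ : pmem Y z) mZ nz) // ez; apply: pmemZ.
Qed.

Lemma pjoin_pimage_sub X Y : X <> Y ->
  psubset (pjoin (pimage phi (pset1 X)) (pimage phi (pset1 Y)))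
          (pimage phi (pjoin (pset1 X) (pset1 Y))).
Proof.
move=> nXY Z hZ; have [x [nx mx]] := point_vec X; have [y [ny my]] := point_vec Y.
have [z [nz mz]] := point_vec Z.
have [x' [imX mapX]] := image_span1_exists X; have [y' [imY mapY]] := image_span1_exists Y.
have sz := pjoin_pimage_span2 imX imY hZ mz.
have [hi | nhi] := classic (free2 x' y').
  have hx := mapX (free2_neq0l hi) x mx nx; have hy := mapY (free2_neq0r hi) y my ny.
  have [w0 [z0 [hw0 hi3]]] := image_off_line hi.
  have [w [sw hw]] := preimage_on_line hx hy hw0 hi3 sz nz.
  have nw := maps_to_neq0 hw.
  exists (pt nw); split; first by have := pjoin_span2 skewF mx my (pt_mem nw) nw sw.
  have [Z1 [-> mZ1]] := maps_to_point hw (pt_mem nw).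
  by rewrite (point_eq_pmem skewF' mZ1 mz nz).
case: (nonfree2_span2 skewF' nhi sz nz) => [[nx' zx] | [ny' zy]].
- exists X; split; first by have := pjoin_span2 skewF mx my mx nx (span2_l x y).
  exact: maps_to_span1_point (mapX nx' x mx nx) mx mz nz zx.
- exists Y; split; first by have := pjoin_span2 skewF mx my my ny (span2_r x y).
  exact: maps_to_span1_point (mapY ny' y my ny) my mz nz zy.
Qed.

Lemma collapsed_line_exceptional_point X Y Z' : X <> Y ->
  phi X = Some Z' -> phi Y = Some Z' ->
  exists Z, pjoin (pset1 X) (pset1 Y) Z /\ phi Z = None.
Proof.
move=> nXY eX eY; have [x [nx mx]] := point_vec X; have [y [ny my]] := point_vec Y.
have [z [nz mz]] := point_vec Z'.
have hx : maps_to x z by split=> //; exists X, Z'.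
have hy : maps_to y z by split=> //; exists Y, Z'.
have [r [sr nr hr]] := collapsed_line_exceptional hx hy (point_neq_free2 skewF mx my nx ny nXY).
exists (pt nr); split; first by have := pjoin_span2 skewF mx my (pt_mem nr) nr sr.
exact: exceptional_point hr (pt_mem nr).
Qed.

End Triangle.
End Onto.
End WeakLinearMaps.

Theorem weak_linear_linear_map (F F' : unitRingType) (V : lmodType F) (V' : lmodType F')
  (phi : projmap V V') : skew_field F -> skew_field F' -> embeddings_onto F F' ->
  weak_linear phi -> contains_triangle (im phi) -> linear_map phi.
Proof.
move=> skewF skewF' onto WL /(image_triangle_of skewF') triangle; split.
- by move=> X Y nXY Z; split; [apply: WL | apply: pjoin_pimage_sub].
- by move=> X Y Z' nXY; apply: collapsed_line_exceptional_point.
Qed.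

Section RMorphismOfLaws.
Variables (R S : pzRingType) (f : R -> S).
Hypotheses (f1 : f 1 = 1) (fD : {morph f : a b / a + b}) (fM : {morph f : a b / a * b}).

Definition laws_fun := f.

Lemma laws_fun_nmod : nmod_morphism laws_fun.
Proof. by split=> //; apply: (addrI (f 0)); rewrite -fD !addr0. Qed.

Lemma laws_fun_monoid : monoid_morphism laws_fun.
Proof. by split. Qed.

HB.instance Definition _ := GRing.isNmodMorphism.Build R S laws_fun laws_fun_nmod.
HB.instance Definition _ := GRing.isMonoidMorphism.Build R S laws_fun laws_fun_monoid.

Definition rmorph_of_laws : {rmorphism R -> S} := laws_fun.

End RMorphismOfLaws.

Lemma rmorph_skew_inj (K : unitRingType) (S : nzRingType) (f : {rmorphism K -> S}) :
  skew_field K -> injective f.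
Proof.
move=> skewK a b e; apply/eqP; rewrite -subr_eq0; apply/negPn/negP => nab.
have : f ((a - b) * (a - b)^-1) = 0 by rewrite rmorphM rmorphB e subrr mul0r.
by rewrite mulrV ?skewK // rmorph1 => /eqP; rewrite oner_eq0.
Qed.

(* Multiplication in K^c is reversed, so a map K^c -> K'^c preserving it preserves
   the multiplication of K -> K'. *)
Lemma embeddings_onto_converse (K K' : unitRingType) : skew_field K ->
  (forall f : {rmorphism K -> K'}, injective f -> forall y, exists x, f x = y) ->
  embeddings_onto K^c K'^c.
Proof.
move=> skewK onto s s1 sD sM.
have sMc : {morph (s : K -> K') : a b / a * b} by move=> a b; apply: sM.
exact: onto (rmorph_of_laws (R := K) (S := K') s1 sD sMc) (rmorph_skew_inj skewK).
Qed.

Theorem corollary3 (K K' : unitRingType)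
  (HK : skew_field K) (HK' : skew_field K')
  (V : lmodType K^c) (V' : lmodType K'^c)
  (phi : projmap V V') :
  weak_linear phi ->
  contains_triangle (im phi) ->
  (forall f : {rmorphism K -> K'}, injective f ->
     forall y : K', exists x : K, f x = y) ->
  linear_map phi.
Proof.
move=> WL triangle onto.
have skewKc : skew_field K^c := HK; have skewKc' : skew_field K'^c := HK'.
exact: weak_linear_linear_map skewKc skewKc' (embeddings_onto_converse HK onto) WL triangle.
Qed.
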